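(* Let $\mathbb{C}$ be a pointed protomodular category and let $X$ be an object of $\mathbb{C}$ such that the generic split extension with kernel $X$ exists. Then the following two conditions are equivalent: (1) there is a generic split extension with kernel $[X]$ and the conjugation morphism $c_X:X\to[X]$ is a characteristic monomorphism; (2) $X$ has trivial center and $[X]$ is strong-complete.
   Context: $\mathbb{C}$ is pointed with finite limits; protomodular means the split short five lemma holds. A split extension is $X\xrightarrow{\kappa}A\underset{\beta}{\overset{\alpha}{\rightleftarrows}}B$ with $\alpha\beta=1_B$, $\kappa$ a kernel of $\alpha$. A generic split extension with kernel $X$, written $X\xrightarrow{k}[X]\ltimes X\underset{i}{\overset{p_1}{\rightleftarrows}}[X]$, is a terminal object in the category of split extensions with kernel $X$ and morphisms whose kernel component is $1_X$. The conjugation morphism $c_X:X\to[X]$ is the codomain component of the unique such morphism from $X\xrightarrow{\langle0,1\rangle}X\times X\underset{\langle1,1\rangle}{\overset{\pi_1}{\rightleftarrows}}X$ to the generic one. The center of $X$ is the terminal object among morphisms $g:B\to X$ commuting with $1_X$ (some $\varphi:B\times X\to X$ has $\varphi\langle1,0\rangle=g$, $\varphi\langle0,1\rangle=1_X$); trivial center means it is $0$. A protosplit monomorphism is a kernel of a split epimorphism; an object is strong-complete if every protosplit monomorphism with domain it is a split monomorphism with a unique retraction. A monomorphism $m:S\to Y$ is Bourn-normal if there is an equivalence relation $(R,r_1,r_2)$ on $Y$ and $\tilde m:S\times S\to R$ with $r_1\tilde m=m\pi_1$, $r_2\tilde m=m\pi_2$ and the square $r_1\tilde m=m\pi_1$ a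 pullback. A morphism $u:S\to X$ is a characteristic monomorphism if for every Bourn-normal monomorphism $n:X\to Y$ the composite $nu$ is a Bourn-normal monomorphism. *)

Set Implicit Arguments.
Unset Strict Implicit.

Record Cat := {
  ob :> Type;
  hom : ob -> ob -> Type;
  idm : forall a, hom a a;
  comp : forall a b c, hom b c -> hom a b -> hom a c;
  comp_idl : forall a b (f : hom a b), comp (idm b) f = f;
  comp_idr : forall a b (f : hom a b), comp f (idm a) = f;
  comp_assoc : forall a b c d (h : hom c d) (g : hom b c) (f : hom a b),
      comp h (comp g f) = comp (comp h g) f
}.
Arguments hom {_} _ _.
Arguments idm {_} _.
Arguments comp {_ _ _ _} _ _.
Notation "g ∘ f" := (comp g f) (at level 40, left associativity).

Section CatDefs.
Context {C : Cat}.

Definition is_zero (z : C) : Prop :=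
  forall a : C, (exists! f : hom z a, True) /\ (exists! f : hom a z, True).
Definition is_zero_mor {a b : C} (f : hom a b) : Prop :=
  exists z : C, is_zero z /\ exists (u : hom a z) (v : hom z b), f = v ∘ u.
Definition is_terminal (t : C) : Prop := forall a : C, exists! f : hom a t, True.

Definition is_iso {a b : C} (f : hom a b) : Prop :=
  exists g : hom b a, g ∘ f = idm a /\ f ∘ g = idm b.
Definition is_mono {s y : C} (m : hom s y) : Prop :=
  forall z (f g : hom z s), m ∘ f = m ∘ g -> f = g.

Definition is_pullback {a b c p : C} (f : hom a c) (g : hom b c)
    (pa : hom p a) (pb : hom p b) : Prop :=
  f ∘ pa = g ∘ pb /\
  forall q (qa : hom q a) (qb : hom q b), f ∘ qa = g ∘ qb ->
    exists! h : hom q p, pa ∘ h = qa /\ pb ∘ h = qb.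

Definition is_product {p a b : C} (pa : hom p a) (pb : hom p b) : Prop :=
  forall q (qa : hom q a) (qb : hom q b),
    exists! h : hom q p, pa ∘ h = qa /\ pb ∘ h = qb.

Definition is_kernel {k a b : C} (kk : hom k a) (f : hom a b) : Prop :=
  is_zero_mor (f ∘ kk) /\
  forall q (g : hom q a), is_zero_mor (f ∘ g) -> exists! h : hom q k, kk ∘ h = g.

Definition is_split_ext {x a b : C} (kappa : hom x a) (alpha : hom a b)
    (beta : hom b a) : Prop :=
  alpha ∘ beta = idm b /\ is_kernel kappa alpha.

Definition is_generic_split_ext {x gx sx : C} (k : hom x sx) (p1 : hom sx gx)
    (i : hom gx sx) : Prop :=
  is_split_ext k p1 i /\
  forall (a b : C) (kappa : hom x a) (alpha : hom a b) (beta : hom b a),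
    is_split_ext kappa alpha beta ->
    exists! vw : hom a sx * hom b gx,
      fst vw ∘ kappa = k /\ p1 ∘ fst vw = snd vw ∘ alpha /\
      fst vw ∘ beta = i ∘ snd vw.

(* c is the conjugation morphism: codomain component of the unique morphism
   from  x --<0,1>--> x*x <==pi1,<1,1>==> x  to the generic split extension *)
Definition is_conjugation {x gx sx : C} (k : hom x sx) (p1 : hom sx gx)
    (i : hom gx sx) (c : hom x gx) : Prop :=
  exists (p : C) (q1 q2 : hom p x), is_product q1 q2 /\
  exists (d01 dd : hom x p) (v : hom p sx),
    is_zero_mor (q1 ∘ d01) /\ q2 ∘ d01 = idm x /\
    q1 ∘ dd = idm x /\ q2 ∘ dd = idm x /\
    v ∘ d01 = k /\ p1 ∘ v = c ∘ q1 /\ v ∘ dd = i ∘ c.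

Definition commutes {b y x : C} (g : hom b x) (f : hom y x) : Prop :=
  exists (p : C) (pb : hom p b) (py : hom p y), is_product pb py /\
  exists (phi : hom p x) (l : hom b p) (r : hom y p),
    pb ∘ l = idm b /\ is_zero_mor (py ∘ l) /\
    is_zero_mor (pb ∘ r) /\ py ∘ r = idm y /\
    phi ∘ l = g /\ phi ∘ r = f.

Definition is_center {z x : C} (g : hom z x) : Prop :=
  commutes g (idm x) /\
  forall b (h : hom b x), commutes h (idm x) -> exists! t : hom b z, g ∘ t = h.

Definition trivial_center (x : C) : Prop :=
  exists (z : C) (g : hom z x), is_zero z /\ is_center g.

Definition is_protosplit_mono {s y : C} (m : hom s y) : Prop :=
  exists (b : C) (alpha : hom y b) (beta : hom b y),
    alpha ∘ beta = idm b /\ is_kernel m alpha.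

Definition strong_complete (x : C) : Prop :=
  forall y (m : hom x y), is_protosplit_mono m -> exists! r : hom y x, r ∘ m = idm x.

Definition jointly_monic {r y : C} (r1 r2 : hom r y) : Prop :=
  forall z (f g : hom z r), r1 ∘ f = r1 ∘ g -> r2 ∘ f = r2 ∘ g -> f = g.

Definition is_equiv_rel {r y : C} (r1 r2 : hom r y) : Prop :=
  jointly_monic r1 r2 /\
  (exists d : hom y r, r1 ∘ d = idm y /\ r2 ∘ d = idm y) /\
  (exists s : hom r r, r1 ∘ s = r2 /\ r2 ∘ s = r1) /\
  (forall p (q1 q2 : hom p r), is_pullback r2 r1 q1 q2 ->
     exists t : hom p r, r1 ∘ t = r1 ∘ q1 /\ r2 ∘ t = r2 ∘ q2).

Definition is_bourn_normal {s y : C} (m : hom s y) : Prop :=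
  is_mono m /\
  exists (r : C) (r1 r2 : hom r y), is_equiv_rel r1 r2 /\
  exists (p : C) (p1 p2 : hom p s), is_product p1 p2 /\
  exists mt : hom p r,
    r1 ∘ mt = m ∘ p1 /\ r2 ∘ mt = m ∘ p2 /\ is_pullback r1 m mt p1.

Definition is_characteristic_mono {s x : C} (u : hom s x) : Prop :=
  forall y (n : hom x y), is_bourn_normal n -> is_bourn_normal (n ∘ u).

End CatDefs.

Definition pointed (C : Cat) : Prop := exists z : C, is_zero z.

Definition has_finite_limits (C : Cat) : Prop :=
  (exists t : C, is_terminal t) /\
  forall (a b c : C) (f : hom a c) (g : hom b c),
    exists (p : C) (pa : hom p a) (pb : hom p b), is_pullback f g pa pb.

(* split short five lemma *)
Definition protomodular (C : Cat) : Prop :=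
  forall (x a b x' a' b' : C) (kappa : hom x a) (alpha : hom a b) (beta : hom b a)
    (kappa' : hom x' a') (alpha' : hom a' b') (beta' : hom b' a')
    (u : hom x x') (v : hom a a') (w : hom b b'),
    is_split_ext kappa alpha beta -> is_split_ext kappa' alpha' beta' ->
    v ∘ kappa = kappa' ∘ u -> alpha' ∘ v = w ∘ alpha -> v ∘ beta = beta' ∘ w ->
    is_iso u -> is_iso w -> is_iso v.

From Stdlib Require Import ClassicalEpsilon.

(* (1) => (2).  The identity is Bourn-normal, so a characteristic [c] is mono.  A morphism
   [h] into [X] commutes with [1_X] exactly when [c ∘ h = 0], so the center of [X] is the
   kernel of [c], hence trivial.  For a protosplit [m : [X] -> Y], [m ∘ c] is Bourn-normal to
   a relation [S] on [Y] whose first projection splits with kernel [X]; the codomain component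
   of the comparison of this split extension with the generic one retracts [m].  Any other
   retraction [r] is a codomain component too, since [c] being mono lets [r ∘ s2] lift the
   extension into the generic one, so the retraction is unique.

   (2) => (1).  A trivial center makes the kernel of [c] trivial, so [c] is mono by
   protomodularity.  Strong-completeness makes [[X] -> [X] × [X] ⇄ [X]] generic.  With
   [mu : [X] ⋉ X -> [X]] restricting to [c] and [1], the mono [c] is Bourn-normal to the
   equivalence relation [(p1, mu)].  A Bourn-normal [n : [X] -> Y] splits, again by
   strong-completeness, and [n ∘ c] is normal to the intersection of the relation of [n]
   with the inverse image of [(p1, mu)] along the splitting. *)

Section CategoryTheory.
Context {C : Cat}.

Lemma pullback_ext {a b c p q : C} {f : hom a c} {g : hom b c} {pa : hom p a} {pb : hom p b}
  (H : is_pullback f g pa pb) (x y : hom q p) :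
  pa ∘ x = pa ∘ y -> pb ∘ x = pb ∘ y -> x = y.
Proof.
  intros Ea Eb. destruct H as [Hsq Huniv].
  assert (Hx : f ∘ (pa ∘ x) = g ∘ (pb ∘ x)) by (rewrite !comp_assoc, Hsq; reflexivity).
  destruct (Huniv q _ _ Hx) as [h [_ Hh]].
  transitivity h; [symmetry|]; apply Hh; auto.
Qed.

Lemma pullback_factor {a b c p q : C} {f : hom a c} {g : hom b c} {pa : hom p a}
  {pb : hom p b} (H : is_pullback f g pa pb) (qa : hom q a) (qb : hom q b) :
  f ∘ qa = g ∘ qb -> exists h, pa ∘ h = qa /\ pb ∘ h = qb.
Proof. intros E. destruct (proj2 H q qa qb E) as [h [Hh _]]. eauto. Qed.

Lemma pullback_precomp_iso {a b c p p' : C} {f : hom a c} {g : hom b c} {pa : hom p a}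
  {pb : hom p b} (u : hom p' p) :
  is_pullback f g pa pb -> is_iso u -> is_pullback f g (pa ∘ u) (pb ∘ u).
Proof.
  intros H [u' [U1 U2]]. split.
  - rewrite !comp_assoc, (proj1 H). reflexivity.
  - intros q qa qb E. destruct (pullback_factor H qa qb E) as [h [Ha Hb]].
    exists (u' ∘ h). split.
    + rewrite <- !comp_assoc, (comp_assoc u u' h), U2, comp_idl. auto.
    + intros h' [Ha' Hb'].
      assert (Eh : u ∘ h' = h) by (apply (pullback_ext H); rewrite comp_assoc; congruence).
      rewrite <- Eh, comp_assoc, U1, comp_idl. reflexivity.
Qed.

Lemma product_ext {a b p q : C} {pa : hom p a} {pb : hom p b}
  (H : is_product pa pb) (x y : hom q p) :
  pa ∘ x = pa ∘ y -> pb ∘ x = pb ∘ y -> x = y.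
Proof.
  intros Ea Eb. destruct (H q (pa ∘ x) (pb ∘ x)) as [h [_ Hh]].
  transitivity h; [symmetry|]; apply Hh; auto.
Qed.

Lemma product_factor {a b p q : C} {pa : hom p a} {pb : hom p b}
  (H : is_product pa pb) (qa : hom q a) (qb : hom q b) :
  exists h, pa ∘ h = qa /\ pb ∘ h = qb.
Proof. destruct (H q qa qb) as [h [Hh _]]. eauto. Qed.

Lemma product_swap {a b p : C} {pa : hom p a} {pb : hom p b} :
  is_product pa pb -> is_product pb pa.
Proof.
  intros H q qb qa. destruct (H q qa qb) as [h [[H1 H2] Hu]].
  exists h. split; [auto|]. intros h' [H1' H2']. apply Hu. auto.
Qed.

Definition is_joint_pullback {a b y z p : C} (f1 : hom a y) (f2 : hom a z)
    (g1 : hom b y) (g2 : hom b z) (pa : hom p a) (pb : hom p b) : Prop :=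
  f1 ∘ pa = g1 ∘ pb /\ f2 ∘ pa = g2 ∘ pb /\
  forall q (qa : hom q a) (qb : hom q b), f1 ∘ qa = g1 ∘ qb -> f2 ∘ qa = g2 ∘ qb ->
    exists! h : hom q p, pa ∘ h = qa /\ pb ∘ h = qb.

Section JointPullback.
Context {a b y z p : C} {f1 : hom a y} {f2 : hom a z} {g1 : hom b y} {g2 : hom b z}
  {pa : hom p a} {pb : hom p b} (H : is_joint_pullback f1 f2 g1 g2 pa pb).

Lemma joint_pullback_ext {q : C} (x x' : hom q p) :
  pa ∘ x = pa ∘ x' -> pb ∘ x = pb ∘ x' -> x = x'.
Proof.
  intros Ea Eb. destruct H as [H1 [H2 Huniv]].
  assert (E1 : f1 ∘ (pa ∘ x) = g1 ∘ (pb ∘ x)) by (rewrite !comp_assoc, H1; reflexivity).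
  assert (E2 : f2 ∘ (pa ∘ x) = g2 ∘ (pb ∘ x)) by (rewrite !comp_assoc, H2; reflexivity).
  destruct (Huniv q _ _ E1 E2) as [h [_ Hh]].
  transitivity h; [symmetry|]; apply Hh; auto.
Qed.

Lemma joint_pullback_factor {q : C} (qa : hom q a) (qb : hom q b) :
  f1 ∘ qa = g1 ∘ qb -> f2 ∘ qa = g2 ∘ qb -> exists h, pa ∘ h = qa /\ pb ∘ h = qb.
Proof. intros E1 E2. destruct (proj2 (proj2 H) q qa qb E1 E2) as [h [Hh _]]. eauto. Qed.

End JointPullback.

Lemma joint_pullback_mono {a b y p : C} {f1 f2 : hom a y} {g1 g2 : hom b y}
  {pa : hom p a} {pb : hom p b} :
  is_joint_pullback f1 f2 g1 g2 pa pb -> jointly_monic g1 g2 -> is_mono pa.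
Proof.
  intros H Hjm q x x' E. apply (joint_pullback_ext H); [exact E|]. destruct H as [H1 [H2 _]].
  apply Hjm; rewrite !comp_assoc; [rewrite <- H1 | rewrite <- H2]; rewrite <- !comp_assoc, E;
    reflexivity.
Qed.

Lemma retraction_mono {a b : C} (f : hom a b) (g : hom b a) : g ∘ f = idm a -> is_mono f.
Proof.
  intros E q x y H.
  rewrite <- (comp_idl x), <- (comp_idl y), <- E, <- !comp_assoc, H. reflexivity.
Qed.

Lemma mono_comp {a b c : C} (f : hom b c) (g : hom a b) :
  is_mono f -> is_mono g -> is_mono (f ∘ g).
Proof. intros Hf Hg q x y E. apply Hg, Hf. rewrite !comp_assoc. exact E. Qed.

Lemma mono_cancel {a b c : C} (f : hom b c) (g : hom a b) : is_mono (f ∘ g) -> is_mono g.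
Proof. intros H q x y E. apply H. rewrite <- !comp_assoc, E. reflexivity. Qed.

Definition is_split_ext_morphism {x a b a' b' : C} (kap : hom x a) (al : hom a b)
    (be : hom b a) (kap' : hom x a') (al' : hom a' b') (be' : hom b' a')
    (v : hom a a') (w : hom b b') : Prop :=
  v ∘ kap = kap' /\ al' ∘ v = w ∘ al /\ v ∘ be = be' ∘ w.

Lemma split_ext_morphism_comp {x a b a' b' a'' b'' : C} {kap : hom x a} {al : hom a b}
  {be : hom b a} {kap' : hom x a'} {al' : hom a' b'} {be' : hom b' a'} {kap'' : hom x a''}
  {al'' : hom a'' b''} {be'' : hom b'' a''} {v : hom a a'} {w : hom b b'} {v' : hom a' a''}
  {w' : hom b' b''} :
  is_split_ext_morphism kap al be kap' al' be' v w ->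
  is_split_ext_morphism kap' al' be' kap'' al'' be'' v' w' ->
  is_split_ext_morphism kap al be kap'' al'' be'' (v' ∘ v) (w' ∘ w).
Proof.
  intros [V1 [V2 V3]] [V1' [V2' V3']]. split; [|split].
  - rewrite <- comp_assoc, V1. exact V1'.
  - rewrite comp_assoc, V2', <- comp_assoc, V2, comp_assoc. reflexivity.
  - rewrite <- comp_assoc, V3, comp_assoc, V3', comp_assoc. reflexivity.
Qed.

Section Generic.
Context {x gx sx : C} {k : hom x sx} {p : hom sx gx} {i : hom gx sx}
  (Hgen : is_generic_split_ext k p i).

Lemma generic_map_exists {a b : C} {kap : hom x a} {al : hom a b} {be : hom b a} :
  is_split_ext kap al be -> exists v w, is_split_ext_morphism kap al be k p i v w.
Proof.
  intros Hs. destruct (proj2 Hgen _ _ _ _ _ Hs) as [[v w] [Hvw _]]. exists v, w. exact Hvw.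
Qed.

Lemma generic_map_unique {a b : C} {kap : hom x a} {al : hom a b} {be : hom b a}
  (v v' : hom a sx) (w w' : hom b gx) :
  is_split_ext kap al be ->
  is_split_ext_morphism kap al be k p i v w ->
  is_split_ext_morphism kap al be k p i v' w' -> w = w'.
Proof.
  intros Hs Hvw Hvw'. destruct (proj2 Hgen _ _ _ _ _ Hs) as [vw [_ Hu]].
  pose proof (Hu (v, w) Hvw) as E. rewrite (Hu (v', w') Hvw') in E.
  injection E. auto.
Qed.

Lemma generic_endomorphism_id (v : hom sx sx) (w : hom gx gx) :
  is_split_ext_morphism k p i k p i v w -> w = idm gx.
Proof.
  intros Hvw. apply (generic_map_unique v (idm sx) w (idm gx) (proj1 Hgen) Hvw).
  split; [|split]; rewrite ?comp_idl, ?comp_idr; reflexivity.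
Qed.

End Generic.

(* Verbatim the tail of [is_bourn_normal], so that the two unfold into each other. *)
Definition normal_to {s y r : C} (m : hom s y) (r1 r2 : hom r y) : Prop :=
  exists (p : C) (p1 p2 : hom p s), is_product p1 p2 /\
  exists mt : hom p r, r1 ∘ mt = m ∘ p1 /\ r2 ∘ mt = m ∘ p2 /\ is_pullback r1 m mt p1.

Context {Z0 : C} (HZ : is_zero Z0).

Definition to_zero (a : C) : hom a Z0 :=
  proj1_sig (constructive_indefinite_description _ (proj2 (HZ a))).
Definition from_zero (a : C) : hom Z0 a :=
  proj1_sig (constructive_indefinite_description _ (proj1 (HZ a))).
Definition zero_mor (a b : C) : hom a b := from_zero b ∘ to_zero a.
Notation "0m" := (zero_mor _ _).

Lemma to_zero_unique {a : C} (f g : hom a Z0) : f = g.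
Proof. destruct (proj2 (HZ a)) as [h [_ Hh]]. rewrite <- (Hh f I), <- (Hh g I). reflexivity. Qed.

Lemma from_zero_unique {a : C} (f g : hom Z0 a) : f = g.
Proof. destruct (proj1 (HZ a)) as [h [_ Hh]]. rewrite <- (Hh f I), <- (Hh g I). reflexivity. Qed.

Lemma zero_mor_iff {a b : C} (f : hom a b) : is_zero_mor f <-> f = 0m.
Proof.
  split.
  - intros [z [Hz [u [v ->]]]]. unfold zero_mor.
    assert (Ev : v = from_zero b ∘ to_zero z).
    { destruct (proj1 (Hz b)) as [h [_ Hh]]. rewrite <- (Hh v I). apply Hh. exact I. }
    rewrite Ev, <- comp_assoc. f_equal. apply to_zero_unique.
  - intros ->. exists Z0. split; [exact HZ|]. exists (to_zero a), (from_zero b). reflexivity.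
Qed.

Lemma zero_mor_compl {a b c : C} (f : hom a b) : 0m ∘ f = zero_mor a c.
Proof. unfold zero_mor. rewrite <- comp_assoc. f_equal. apply to_zero_unique. Qed.

Lemma zero_mor_compr {a b c : C} (f : hom b c) : f ∘ 0m = zero_mor a c.
Proof. unfold zero_mor. rewrite comp_assoc. f_equal. apply from_zero_unique. Qed.

Ltac zsimpl := repeat (rewrite <- comp_assoc || rewrite comp_idl || rewrite comp_idr
  || rewrite zero_mor_compl || rewrite zero_mor_compr).

Lemma kernel_zero {k a b : C} {kk : hom k a} {f : hom a b} :
  is_kernel kk f -> f ∘ kk = 0m.
Proof. intros [H _]. apply zero_mor_iff, H. Qed.

Lemma kernel_factor {k a b q : C} {kk : hom k a} {f : hom a b} (g : hom q a) :
  is_kernel kk f -> f ∘ g = 0m -> exists h, kk ∘ h = g.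
Proof.
  intros [_ H] E. destruct (H q g) as [h [Hh _]]; [apply zero_mor_iff, E|]. eauto.
Qed.

Lemma kernel_mono {k a b : C} {kk : hom k a} {f : hom a b} :
  is_kernel kk f -> is_mono kk.
Proof.
  intros Hk q x y E.
  assert (Z : is_zero_mor (f ∘ (kk ∘ x))).
  { apply zero_mor_iff. rewrite comp_assoc, (kernel_zero Hk). zsimpl. reflexivity. }
  destruct (proj2 Hk q _ Z) as [h [_ Hu]].
  transitivity h; [symmetry|]; apply Hu; auto.
Qed.

Lemma kernel_intro {k a b : C} (kk : hom k a) (f : hom a b) :
  f ∘ kk = 0m -> is_mono kk ->
  (forall q (g : hom q a), f ∘ g = 0m -> exists h, kk ∘ h = g) -> is_kernel kk f.
Proof.
  intros H0 Hm Hf. split; [apply zero_mor_iff, H0|].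
  intros q g Hg. destruct (Hf q g (proj1 (zero_mor_iff _) Hg)) as [h Hh].
  exists h. split; [exact Hh|]. intros h' E. apply Hm. congruence.
Qed.

Lemma zero_kernel {a b : C} (f : hom a b) :
  (forall q (g : hom q a), f ∘ g = 0m -> g = 0m) -> is_kernel (zero_mor Z0 a) f.
Proof.
  intros Hf. apply kernel_intro.
  - zsimpl. reflexivity.
  - intros q x y _. apply to_zero_unique.
  - intros q g E. exists (to_zero q). rewrite (Hf q g E). unfold zero_mor.
    rewrite <- comp_assoc. f_equal. apply to_zero_unique.
Qed.

Lemma product_kernel {a b p : C} {pa : hom p a} {pb : hom p b} (r : hom b p) :
  is_product pa pb -> pa ∘ r = 0m -> pb ∘ r = idm b -> is_kernel r pa.
Proof.
  intros Hp R1 R2. apply kernel_intro; auto.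
  - exact (retraction_mono r pb R2).
  - intros q g E. exists (pb ∘ g). apply (product_ext Hp).
    + rewrite comp_assoc, R1, E. zsimpl. reflexivity.
    + rewrite comp_assoc, R2, comp_idl. reflexivity.
Qed.

Lemma product_split_ext {a b p : C} {pa : hom p a} {pb : hom p b} (l : hom a p) (r : hom b p) :
  is_product pa pb -> pa ∘ l = idm a -> pa ∘ r = 0m -> pb ∘ r = idm b ->
  is_split_ext r pa l.
Proof. intros Hp L R1 R2. split; [exact L | exact (product_kernel r Hp R1 R2)]. Qed.

Lemma pullback_split_ext {x a b b' p : C} {kap : hom x a} {al : hom a b} {f : hom b' b}
  {pa : hom p a} {pb : hom p b'} (kb : hom x p) (bb : hom b' p) :
  is_kernel kap al -> is_pullback al f pa pb ->
  pa ∘ kb = kap -> pb ∘ kb = 0m -> pb ∘ bb = idm b' -> is_split_ext kb pb bb.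
Proof.
  intros Hk Hpb K1 K2 B. split; [exact B|]. apply kernel_intro; [exact K2| |].
  - intros q u v E. apply (kernel_mono Hk). rewrite <- K1, <- !comp_assoc, E. reflexivity.
  - intros q g E.
    assert (E' : al ∘ (pa ∘ g) = 0m).
    { rewrite comp_assoc, (proj1 Hpb), <- comp_assoc, E. zsimpl. reflexivity. }
    destruct (kernel_factor _ Hk E') as [h H]. exists h. apply (pullback_ext Hpb).
    + rewrite comp_assoc, K1. exact H.
    + rewrite comp_assoc, K2, E. zsimpl. reflexivity.
Qed.

Lemma pullback_kernel {a b c p k : C} {f : hom a c} {g : hom b c} {pa : hom p a}
  {pb : hom p b} {kk : hom k p} :
  is_pullback f g pa pb -> is_kernel kk pb -> is_kernel (pa ∘ kk) f.
Proof.
  intros Hpb Hk. apply kernel_intro.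
  - rewrite comp_assoc, (proj1 Hpb), <- comp_assoc, (kernel_zero Hk). zsimpl. reflexivity.
  - intros q x y E. apply (kernel_mono Hk), (pullback_ext Hpb).
    + rewrite !comp_assoc. exact E.
    + rewrite !comp_assoc, (kernel_zero Hk). zsimpl. reflexivity.
  - intros q h E. destruct (pullback_factor Hpb h (zero_mor q b)) as [t [T1 T2]].
    + rewrite E. zsimpl. reflexivity.
    + destruct (kernel_factor t Hk T2) as [t' Ht']. exists t'.
      rewrite <- comp_assoc, Ht'. exact T1.
Qed.

Lemma normal_to_kernel {s y r : C} {m : hom s y} {r1 r2 : hom r y} :
  normal_to m r1 r2 -> exists kk : hom s r, is_kernel kk r1 /\ r2 ∘ kk = m.
Proof.
  intros [p [p1 [p2 [Hp [mt [T1 [T2 Hpb]]]]]]].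
  destruct (product_factor Hp 0m (idm s)) as [j [J1 J2]].
  exists (mt ∘ j). split.
  - exact (pullback_kernel Hpb (product_kernel j Hp J1 J2)).
  - rewrite comp_assoc, T2, <- comp_assoc, J2, comp_idr. reflexivity.
Qed.

Lemma zero_commutes_idm (x : C) : commutes (zero_mor Z0 x) (idm x).
Proof.
  assert (Hp : is_product (to_zero x) (idm x)).
  { intros q qa qb. exists qb. split.
    - split; [apply to_zero_unique | apply comp_idl].
    - intros h [_ H]. rewrite comp_idl in H. auto. }
  exists x, (to_zero x), (idm x). split; [exact Hp|].
  exists (idm x), (zero_mor Z0 x), (idm x).
  split; [apply to_zero_unique|]. split; [apply zero_mor_iff; zsimpl; reflexivity|].
  split; [apply zero_mor_iff, to_zero_unique|].
  split; [apply comp_idl|]. split; apply comp_idl.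
Qed.

Lemma split_ext_protosplit {x a b : C} {kap : hom x a} {al : hom a b} {be : hom b a} :
  is_split_ext kap al be -> is_protosplit_mono kap.
Proof. intros Hs. exists b, al, be. exact Hs. Qed.

(* The retraction is [rho ∘ d], where [rho] retracts the kernel [(0, n)] of [r1]. *)
Lemma strong_complete_normal_split {g y : C} (n : hom g y) :
  strong_complete g -> is_bourn_normal n -> exists r : hom y g, r ∘ n = idm g.
Proof.
  intros Hsc [_ [R [r1 [r2 [[Hjm [[d [D1 D2]] _]] [P [p1 [p2 [Hp [mt [T1 [T2 Hpb]]]]]]]]]]]].
  destruct (product_factor Hp 0m (idm g)) as [j [J1 J2]].
  destruct (product_factor Hp (idm g) 0m) as [j' [J1' J2']].
  destruct (product_factor Hp (idm g) (idm g)) as [dg [DG1 DG2]].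
  pose proof (product_split_ext j' j Hp J1' J1 J2) as Hj.
  assert (Hmj : is_split_ext (mt ∘ j) r1 d) by exact (conj D1 (pullback_kernel Hpb (proj2 Hj))).
  destruct (Hsc _ _ (split_ext_protosplit Hmj)) as [rho [Hrho _]].
  destruct (Hsc _ _ (split_ext_protosplit Hj)) as [r0 [_ U0]].
  assert (Rmt : rho ∘ mt = p2).
  { rewrite <- (U0 (rho ∘ mt)), <- (U0 p2); [reflexivity | exact J2 |].
    rewrite <- comp_assoc. exact Hrho. }
  assert (Dn : d ∘ n = mt ∘ dg).
  { apply Hjm; rewrite !comp_assoc; [rewrite D1, T1 | rewrite D2, T2];
      rewrite <- comp_assoc; [rewrite DG1 | rewrite DG2]; rewrite comp_idl, comp_idr;
      reflexivity. }
  exists (rho ∘ d). rewrite <- comp_assoc, Dn, comp_assoc, Rmt. exact DG2.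
Qed.

Section FiniteLimits.
Context (HPB : forall (a b c : C) (f : hom a c) (g : hom b c),
  exists (p : C) (pa : hom p a) (pb : hom p b), is_pullback f g pa pb).

Lemma product_exists (a b : C) : exists p (pa : hom p a) (pb : hom p b), is_product pa pb.
Proof.
  destruct (HPB _ _ _ (to_zero a) (to_zero b)) as [p [pa [pb H]]].
  exists p, pa, pb. intros q qa qb.
  destruct (proj2 H q qa qb (to_zero_unique _ _)) as [h [Hh Hu]].
  exists h. split; auto.
Qed.

Lemma kernel_exists {a b : C} (f : hom a b) : exists k (kk : hom k a), is_kernel kk f.
Proof.
  destruct (HPB _ _ _ f (from_zero b)) as [p [pa [pz H]]].
  exists p, pa. apply kernel_intro.
  - rewrite (proj1 H). unfold zero_mor. f_equal. apply to_zero_unique.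
  - intros q x y E. apply (pullback_ext H); [exact E | apply to_zero_unique].
  - intros q g E. destruct (pullback_factor H g (to_zero q)) as [h [Hh _]]; [|eauto].
    rewrite E. reflexivity.
Qed.

Lemma joint_pullback_exists {a b y z : C} (f1 : hom a y) (f2 : hom a z)
  (g1 : hom b y) (g2 : hom b z) :
  exists p (pa : hom p a) (pb : hom p b), is_joint_pullback f1 f2 g1 g2 pa pb.
Proof.
  destruct (product_exists y z) as [yz [py [pz Hp]]].
  destruct (product_factor Hp f1 f2) as [f [F1 F2]].
  destruct (product_factor Hp g1 g2) as [g [G1 G2]].
  destruct (HPB _ _ _ f g) as [p [pa [pb [Hsq Hu]]]].
  assert (Hsq1 : f1 ∘ pa = g1 ∘ pb) by (rewrite <- F1, <- G1, <- !comp_assoc, Hsq; reflexivity).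
  assert (Hsq2 : f2 ∘ pa = g2 ∘ pb) by (rewrite <- F2, <- G2, <- !comp_assoc, Hsq; reflexivity).
  exists p, pa, pb. split; [exact Hsq1|]. split; [exact Hsq2|].
  intros q qa qb E1 E2. apply Hu. apply (product_ext Hp); rewrite !comp_assoc.
  - rewrite F1, G1. exact E1.
  - rewrite F2, G2. exact E2.
Qed.

Lemma kernel_bourn_normal {s y b : C} (m : hom s y) (f : hom y b) :
  is_kernel m f -> is_bourn_normal m.
Proof.
  intros Hk. split; [exact (kernel_mono Hk)|].
  destruct (HPB _ _ _ f f) as [r [r1 [r2 Hr]]].
  exists r, r1, r2. split.
  - split; [|split; [|split]].
    + intros z g h E1 E2. apply (pullback_ext Hr); auto.
    + destruct (pullback_factor Hr (idm y) (idm y) eq_refl) as [d D]. exists d; exact D.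
    + destruct (pullback_factor Hr r2 r1 (eq_sym (proj1 Hr))) as [t T]. exists t; exact T.
    + intros p q1 q2 Hq. apply (pullback_factor Hr).
      rewrite !comp_assoc, (proj1 Hr), <- !comp_assoc, (proj1 Hq),
        !comp_assoc, (proj1 Hr). reflexivity.
  - destruct (product_exists s s) as [p [pp1 [pp2 Hp]]].
    exists p, pp1, pp2. split; [exact Hp|].
    destruct (pullback_factor Hr (m ∘ pp1) (m ∘ pp2)) as [mt [M1 M2]].
    { rewrite !comp_assoc, (kernel_zero Hk). zsimpl. reflexivity. }
    exists mt. split; [exact M1|]. split; [exact M2|]. split; [exact M1|].
    intros q qa qb E.
    assert (E2 : f ∘ (r2 ∘ qa) = 0m).
    { rewrite comp_assoc, <- (proj1 Hr), <- comp_assoc, E, comp_assoc, (kernel_zero Hk).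
      zsimpl. reflexivity. }
    destruct (kernel_factor _ Hk E2) as [h2 H2].
    destruct (product_factor Hp qb h2) as [h [Hh1 Hh2]].
    exists h. split.
    + split; [|exact Hh1]. apply (pullback_ext Hr).
      * rewrite comp_assoc, M1, <- comp_assoc, Hh1. exact (eq_sym E).
      * rewrite comp_assoc, M2, <- comp_assoc, Hh2. exact H2.
    + intros h' [H1' H2']. apply (product_ext Hp); [congruence|].
      apply (kernel_mono Hk). rewrite Hh2, H2, comp_assoc, <- M2, <- comp_assoc, H1'.
      reflexivity.
Qed.

Lemma idm_bourn_normal (y : C) : is_bourn_normal (idm y).
Proof.
  apply (kernel_bourn_normal (idm y) (to_zero y)), kernel_intro.
  - apply to_zero_unique.
  - intros q u v E. rewrite !comp_idl in E. exact E.
  - intros q g _. exists g. apply comp_idl.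
Qed.

Lemma characteristic_mono_is_mono {s x : C} (u : hom s x) :
  is_characteristic_mono u -> is_mono u.
Proof.
  intros H. destruct (H _ _ (idm_bourn_normal x)) as [Hm _].
  rewrite comp_idl in Hm. exact Hm.
Qed.

Lemma strong_complete_generic_split_ext (x : C) : strong_complete x ->
  exists (b a : C) (k : hom x a) (p : hom a b) (i : hom b a), is_generic_split_ext k p i.
Proof.
  intros Hsc.
  destruct (product_exists x x) as [xx [g1 [g2 Hp]]].
  destruct (product_factor Hp (idm x) 0m) as [j [J1 J2]].
  destruct (product_factor Hp (idm x) (idm x)) as [dg [DG1 DG2]].
  exists x, xx, j, g2, dg. split; [exact (product_split_ext dg j (product_swap Hp) DG2 J2 J1)|].
  intros a b kap al be Hs.
  destruct (Hsc a kap (split_ext_protosplit Hs)) as [rho [Hrho Urho]].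
  destruct (product_factor Hp rho (rho ∘ (be ∘ al))) as [v [V1 V2]].
  exists (v, rho ∘ be). split; [split; [|split]; simpl|].
  - apply (product_ext Hp).
    + rewrite comp_assoc, V1, J1. exact Hrho.
    + rewrite comp_assoc, V2, J2, <- !comp_assoc, (kernel_zero (proj2 Hs)). zsimpl. reflexivity.
  - rewrite V2, comp_assoc. reflexivity.
  - apply (product_ext Hp); rewrite !comp_assoc; [rewrite V1, DG1 | rewrite V2, DG2];
      rewrite ?comp_idl, <- ?comp_assoc, ?(proj1 Hs), ?comp_idr; reflexivity.
  - intros [v' w'] [A1 [A2 A3]]. simpl in A1, A2, A3.
    assert (Er : rho = g1 ∘ v') by (apply Urho; rewrite <- comp_assoc, A1; exact J1).
    assert (Ew : rho ∘ be = w').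
    { rewrite Er, <- comp_assoc, A3, comp_assoc, DG1, comp_idl. reflexivity. }
    assert (Ev : v = v').
    { apply (product_ext Hp); [rewrite V1; exact Er|].
      rewrite V2, A2, <- Ew, comp_assoc. reflexivity. }
    rewrite Ev, Ew. reflexivity.
Qed.


Section Protomodular.
Context (HP : protomodular C).

Lemma idm_iso (a : C) : is_iso (idm a).
Proof. exists (idm a). split; apply comp_idl. Qed.

Lemma split_ext_morphism_iso {x a b a' : C} {kap : hom x a} {al : hom a b} {be : hom b a}
  {kap' : hom x a'} {al' : hom a' b} {be' : hom b a'} (v : hom a a') :
  is_split_ext kap al be -> is_split_ext kap' al' be' ->
  is_split_ext_morphism kap al be kap' al' be' v (idm b) -> is_iso v.
Proof.
  intros Hs Hs' [V1 [V2 V3]]. rewrite comp_idr in V3.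
  apply (HP _ _ _ _ _ _ kap al be kap' al' be' (idm x) v (idm b) Hs Hs');
    rewrite ?comp_idr; auto using idm_iso.
Qed.

Lemma split_ext_restrict {x a b m : C} {kap : hom x a} {al : hom a b} {be : hom b a}
  (mm : hom m a) (kap' : hom x m) (be' : hom b m) :
  is_split_ext kap al be -> mm ∘ kap' = kap -> mm ∘ be' = be ->
  (forall q (g : hom q m), al ∘ (mm ∘ g) = 0m -> exists h, kap' ∘ h = g) ->
  is_split_ext kap' (al ∘ mm) be'.
Proof.
  intros [Hab Hk] E1 E2 Hfac. split; [rewrite <- comp_assoc, E2; exact Hab|].
  apply kernel_intro.
  - rewrite <- comp_assoc, E1. exact (kernel_zero Hk).
  - apply (mono_cancel mm). rewrite E1. exact (kernel_mono Hk).
  - intros q g E. rewrite <- comp_assoc in E. exact (Hfac q g E).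
Qed.

Lemma split_ext_mono_iso {x a b m : C} {kap : hom x a} {al : hom a b} {be : hom b a}
  (mm : hom m a) (kap' : hom x m) (be' : hom b m) :
  is_split_ext kap al be -> is_mono mm -> mm ∘ kap' = kap -> mm ∘ be' = be -> is_iso mm.
Proof.
  intros Hs Hm E1 E2.
  assert (Hs' : is_split_ext kap' (al ∘ mm) be').
  { apply (split_ext_restrict mm kap' be' Hs E1 E2). intros q g E.
    destruct (kernel_factor _ (proj2 Hs) E) as [h Hh]. exists h. apply Hm.
    rewrite comp_assoc, E1. exact Hh. }
  apply (split_ext_morphism_iso mm Hs' Hs).
  split; [exact E1|]. split; [rewrite comp_idl; reflexivity | rewrite comp_idr; exact E2].
Qed.

Lemma split_ext_jointly_epic {x a b z : C} {kap : hom x a} {al : hom a b} {be : hom b a}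
  (f g : hom a z) :
  is_split_ext kap al be -> f ∘ kap = g ∘ kap -> f ∘ be = g ∘ be -> f = g.
Proof.
  intros Hs E1 E2.
  destruct (joint_pullback_exists (idm a) f (idm a) g) as [e [ea [eb He]]].
  assert (Eab : ea = eb) by (pose proof (proj1 He) as T; rewrite !comp_idl in T; exact T).
  subst eb.
  destruct (joint_pullback_factor He kap kap eq_refl E1) as [k' [K _]].
  destruct (joint_pullback_factor He be be eq_refl E2) as [b' [B _]].
  assert (Hm : is_mono ea) by (intros q u v E; exact (joint_pullback_ext He u v E E)).
  destruct (split_ext_mono_iso ea k' b' Hs Hm K B) as [j [_ J]].
  rewrite <- (comp_idr f), <- (comp_idr g), <- J, !comp_assoc, (proj1 (proj2 He)).
  reflexivity.
Qed.

Lemma split_epi_trivial_kernel_inverse {a b : C} (al : hom a b) (be : hom b a) :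
  al ∘ be = idm b -> (forall q (g : hom q a), al ∘ g = 0m -> g = 0m) -> be ∘ al = idm a.
Proof.
  intros Hab Hk.
  assert (S1 : is_split_ext (zero_mor Z0 b) (idm b) (idm b)).
  { split; [apply comp_idl|]. apply zero_kernel. intros q g E. rewrite comp_idl in E. exact E. }
  destruct (split_ext_morphism_iso be S1 (conj Hab (zero_kernel al Hk))) as [j [J1 J2]].
  { split; [|split]; zsimpl; [reflexivity | exact Hab | reflexivity]. }
  assert (Ej : j = al).
  { rewrite <- (comp_idl j), <- Hab, <- comp_assoc, J2, comp_idr. reflexivity. }
  rewrite <- Ej. exact J2.
Qed.

Lemma mono_of_trivial_kernel {a b : C} (f : hom a b) :
  (forall q (g : hom q a), f ∘ g = 0m -> g = 0m) -> is_mono f.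
Proof.
  intros Hf.
  destruct (HPB _ _ _ f f) as [r [e1 [e2 Hr]]].
  destruct (pullback_factor Hr (idm a) (idm a) eq_refl) as [d [D1 D2]].
  assert (Hde : d ∘ e1 = idm r).
  { apply (split_epi_trivial_kernel_inverse e1 d D1). intros q g E.
    assert (E2 : e2 ∘ g = 0m).
    { apply Hf. rewrite comp_assoc, <- (proj1 Hr), <- comp_assoc, E. zsimpl. reflexivity. }
    apply (pullback_ext Hr); zsimpl; assumption. }
  intros q x y E. destruct (pullback_factor Hr x y E) as [h [H1 H2]].
  rewrite <- H1, <- H2, <- (comp_idl h), <- Hde, !comp_assoc, D1, D2. reflexivity.
Qed.

Lemma jointly_monic_of_trivial_kernel {a y : C} (f g : hom a y) :
  (forall q (h : hom q a), f ∘ h = 0m -> g ∘ h = 0m -> h = 0m) -> jointly_monic f g.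
Proof.
  intros Hfg. destruct (product_exists y y) as [yy [py [pz Hp]]].
  destruct (product_factor Hp f g) as [u [U1 U2]].
  assert (Hu : is_mono u).
  { apply mono_of_trivial_kernel. intros q h E. apply Hfg.
    - rewrite <- U1, <- comp_assoc, E. zsimpl. reflexivity.
    - rewrite <- U2, <- comp_assoc, E. zsimpl. reflexivity. }
  intros q x x' E1 E2. apply Hu, (product_ext Hp); rewrite !comp_assoc.
  - rewrite U1. exact E1.
  - rewrite U2. exact E2.
Qed.

Lemma reflexive_relation_transitive {y r : C} (r1 r2 : hom r y) (d : hom y r) :
  jointly_monic r1 r2 -> r1 ∘ d = idm y -> r2 ∘ d = idm y ->
  forall p (q1 q2 : hom p r), is_pullback r2 r1 q1 q2 ->
  exists t, r1 ∘ t = r1 ∘ q1 /\ r2 ∘ t = r2 ∘ q2.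
Proof.
  intros Hjm D1 D2 p q1 q2 Hq.
  destruct (joint_pullback_exists (r1 ∘ q1) (r2 ∘ q2) r1 r2) as [m [mp [mr Hm]]].
  destruct (kernel_exists q2) as [k [kk Hk]].
  destruct (pullback_factor Hq (d ∘ r1) (idm r)) as [sh [S1 S2]].
  { rewrite comp_assoc, D2, comp_idl, comp_idr. reflexivity. }
  destruct (joint_pullback_factor Hm kk (q1 ∘ kk)) as [k' [K _]].
  { symmetry. apply comp_assoc. }
  { rewrite <- !comp_assoc, (kernel_zero Hk), (comp_assoc r2 q1), (proj1 Hq),
      <- comp_assoc, (kernel_zero Hk). zsimpl. reflexivity. }
  destruct (joint_pullback_factor Hm sh (idm r)) as [s' [S _]].
  { rewrite <- comp_assoc, S1, comp_assoc, D1, comp_idl, comp_idr. reflexivity. }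
  { rewrite <- comp_assoc, S2. reflexivity. }
  destruct (split_ext_mono_iso mp k' s' (conj S2 Hk) (joint_pullback_mono Hm Hjm) K S)
    as [j [_ J]].
  destruct Hm as [M1 [M2 _]].
  exists (mr ∘ j). split; rewrite comp_assoc; [rewrite <- M1 | rewrite <- M2];
    rewrite <- comp_assoc, J, comp_idr; reflexivity.
Qed.

Lemma reflexive_relation_symmetric {y r : C} (r1 r2 : hom r y) (d : hom y r) :
  jointly_monic r1 r2 -> r1 ∘ d = idm y -> r2 ∘ d = idm y ->
  (forall q (g : hom q r), r1 ∘ g = 0m -> exists g', r1 ∘ g' = r2 ∘ g /\ r2 ∘ g' = 0m) ->
  exists s, r1 ∘ s = r2 /\ r2 ∘ s = r1.
Proof.
  intros Hjm D1 D2 Hker.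
  destruct (joint_pullback_exists r2 r1 r1 r2) as [m [mp [mr Hm]]].
  destruct (kernel_exists r1) as [k [kk Hk]].
  destruct (Hker _ kk (kernel_zero Hk)) as [g' [G1 G2]].
  destruct (joint_pullback_factor Hm kk g') as [k' [K _]].
  { symmetry. exact G1. }
  { rewrite G2. exact (kernel_zero Hk). }
  destruct (joint_pullback_factor Hm d d) as [s' [S _]]; [congruence | congruence |].
  destruct (split_ext_mono_iso mp k' s' (conj D1 Hk) (joint_pullback_mono Hm Hjm) K S)
    as [j [_ J]].
  destruct Hm as [M1 [M2 _]].
  exists (mr ∘ j). split; rewrite comp_assoc; [rewrite <- M1 | rewrite <- M2];
    rewrite <- comp_assoc, J, comp_idr; reflexivity.
Qed.

(* [t'] detects the kernel of the target; the lift is read off the joint pullback of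
   [(al', t')] and [(f ∘ al, t)], which protomodularity identifies with [a]. *)
Lemma split_ext_morphism_lift {x a b a' b' z : C} {kap : hom x a} {al : hom a b}
  {be : hom b a} {kap' : hom x a'} {al' : hom a' b'} {be' : hom b' a'}
  (f : hom b b') (t' : hom a' z) (t : hom a z) :
  is_split_ext kap al be -> is_split_ext kap' al' be' ->
  t' ∘ kap' = t ∘ kap -> is_mono (t' ∘ kap') -> t' ∘ (be' ∘ f) = t ∘ be ->
  exists v, is_split_ext_morphism kap al be kap' al' be' v f.
Proof.
  intros [Hab Hk] [Hab' Hk'] E1 Hm E2.
  destruct (joint_pullback_exists al' t' (f ∘ al) t) as [p [pi' [pi Hp]]].
  destruct (joint_pullback_factor Hp kap' kap) as [kp [KP1 KP2]]; [|exact E1|].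
  { rewrite (kernel_zero Hk'), <- comp_assoc, (kernel_zero Hk). zsimpl. reflexivity. }
  destruct (joint_pullback_factor Hp (be' ∘ f) be) as [bp [BP1 BP2]]; [|exact E2|].
  { rewrite comp_assoc, Hab', comp_idl, <- comp_assoc, Hab, comp_idr. reflexivity. }
  pose proof Hp as [P1 [P2 _]].
  assert (Hs : is_split_ext kp (al ∘ pi) bp).
  { apply (split_ext_restrict pi kp bp (conj Hab Hk) KP2 BP2). intros q g E.
    destruct (kernel_factor _ Hk E) as [h H].
    assert (E' : al' ∘ (pi' ∘ g) = 0m).
    { rewrite comp_assoc, P1, <- !comp_assoc, E. zsimpl. reflexivity. }
    destruct (kernel_factor _ Hk' E') as [h' H'].
    assert (Ehh : h' = h).
    { apply Hm. rewrite <- !comp_assoc, H', comp_assoc, P2, <- comp_assoc, <- H,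
        comp_assoc, <- E1, <- comp_assoc. reflexivity. }
    subst h'. exists h. apply (joint_pullback_ext Hp); rewrite comp_assoc.
    - rewrite KP1. exact H'.
    - rewrite KP2. exact H. }
  destruct (split_ext_morphism_iso pi Hs (conj Hab Hk)) as [j [J1 J2]].
  { split; [exact KP2|]. split; [rewrite comp_idl | rewrite comp_idr; exact BP2]; reflexivity. }
  assert (Jk : j ∘ kap = kp) by (rewrite <- KP2, comp_assoc, J1, comp_idl; reflexivity).
  assert (Jb : j ∘ be = bp) by (rewrite <- BP2, comp_assoc, J1, comp_idl; reflexivity).
  exists (pi' ∘ j). split; [|split].
  - rewrite <- comp_assoc, Jk. exact KP1.
  - rewrite comp_assoc, P1, <- !comp_assoc, J2, comp_idr. reflexivity.
  - rewrite <- comp_assoc, Jb. exact BP1.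
Qed.

Lemma equiv_rel_inverse_image {y g r e s : C} {r1 r2 : hom r y} {e1 e2 : hom e g}
  (f : hom y g) (sr : hom s r) (se : hom s e) :
  is_equiv_rel r1 r2 -> is_equiv_rel e1 e2 ->
  is_joint_pullback (f ∘ r1) (f ∘ r2) e1 e2 sr se -> is_equiv_rel (r1 ∘ sr) (r2 ∘ sr).
Proof.
  intros [Rjm [[d [D1 D2]] [[sy [SY1 SY2]] _]]] [Ejm [[de [DE1 DE2]] [[sx [SX1 SX2]] _]]] Hs.
  pose proof Hs as [H1 [H2 _]].
  assert (Hjm : jointly_monic (r1 ∘ sr) (r2 ∘ sr)).
  { intros q u v E1 E2. apply (joint_pullback_mono Hs Ejm), Rjm; rewrite !comp_assoc; assumption. }
  destruct (joint_pullback_factor Hs d (de ∘ f)) as [ds [DS _]].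
  { rewrite <- comp_assoc, D1, comp_assoc, DE1, comp_idl, comp_idr. reflexivity. }
  { rewrite <- comp_assoc, D2, comp_assoc, DE2, comp_idl, comp_idr. reflexivity. }
  assert (DS1 : r1 ∘ sr ∘ ds = idm y) by (rewrite <- comp_assoc, DS; exact D1).
  assert (DS2 : r2 ∘ sr ∘ ds = idm y) by (rewrite <- comp_assoc, DS; exact D2).
  destruct (joint_pullback_factor Hs (sy ∘ sr) (sx ∘ se)) as [ss [SS _]].
  { rewrite <- !comp_assoc, (comp_assoc r1 sy), SY1, (comp_assoc e1 sx), SX1, comp_assoc, H2.
    reflexivity. }
  { rewrite <- !comp_assoc, (comp_assoc r2 sy), SY2, (comp_assoc e2 sx), SX2, comp_assoc, H1.
    reflexivity. }
  split; [exact Hjm|]. split; [exists ds; auto|]. split.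
  - exists ss. rewrite <- !comp_assoc, SS, !comp_assoc, SY1, SY2. auto.
  - exact (reflexive_relation_transitive _ _ ds Hjm DS1 DS2).
Qed.

Lemma normal_to_inverse_image {s g y r e t : C} {n : hom g y} {r1 r2 : hom r y}
  {u : hom s g} {e1 e2 : hom e g} (f : hom y g) (tr : hom t r) (te : hom t e) :
  normal_to n r1 r2 -> normal_to u e1 e2 -> f ∘ n = idm g ->
  is_joint_pullback (f ∘ r1) (f ∘ r2) e1 e2 tr te ->
  normal_to (n ∘ u) (r1 ∘ tr) (r2 ∘ tr).
Proof.
  intros [P [pn1 [pn2 [Hpn [mt [T1 [T2 Hpb]]]]]]] [Q [q1 [q2 [Hq [ut [U1 [U2 Upb]]]]]]] Hf Ht.
  pose proof Ht as [H1 [H2 _]].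
  assert (F1 : f ∘ (r1 ∘ mt) = pn1) by (rewrite T1, comp_assoc, Hf, comp_idl; reflexivity).
  assert (F2 : f ∘ (r2 ∘ mt) = pn2) by (rewrite T2, comp_assoc, Hf, comp_idl; reflexivity).
  destruct (product_factor Hpn (u ∘ q1) (u ∘ q2)) as [uu [UU1 UU2]].
  destruct (joint_pullback_factor Ht (mt ∘ uu) ut) as [mtS [M1 M2]].
  { rewrite U1, <- UU1, <- F1, <- !comp_assoc. reflexivity. }
  { rewrite U2, <- UU2, <- F2, <- !comp_assoc. reflexivity. }
  assert (S1 : r1 ∘ tr ∘ mtS = n ∘ u ∘ q1).
  { rewrite <- comp_assoc, M1, comp_assoc, T1, <- comp_assoc, UU1, comp_assoc. reflexivity. }
  exists Q, q1, q2. split; [exact Hq|]. exists mtS. split; [exact S1|]. split.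
  { rewrite <- comp_assoc, M1, comp_assoc, T2, <- comp_assoc, UU2, comp_assoc. reflexivity. }
  split; [exact S1|]. intros Q' qa qb E.
  destruct (pullback_factor Hpb (tr ∘ qa) (u ∘ qb)) as [h1 [H11 H12]].
  { rewrite !comp_assoc. exact E. }
  destruct (pullback_factor Upb (te ∘ qa) qb) as [h2 [H21 H22]].
  { rewrite comp_assoc, <- H1, <- H12, <- F1, <- !comp_assoc, <- H11. reflexivity. }
  assert (Euu : uu ∘ h2 = h1).
  { apply (product_ext Hpn).
    - rewrite comp_assoc, UU1, <- comp_assoc, H22. exact (eq_sym H12).
    - rewrite comp_assoc, UU2, <- U2, <- comp_assoc, H21, comp_assoc, <- H2, <- F2,
        <- !comp_assoc, <- H11. reflexivity. }
  exists h2. split.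
  - split; [|exact H22]. apply (joint_pullback_ext Ht); rewrite comp_assoc.
    + rewrite M1, <- comp_assoc, Euu. exact H11.
    + rewrite M2. exact H21.
  - intros h' [Hh1 Hh2]. apply (pullback_ext Upb).
    + rewrite H21, <- M2, <- comp_assoc, Hh1. reflexivity.
    + rewrite H22, Hh2. reflexivity.
Qed.

Lemma bourn_normal_comp_split_mono {s g y : C} (n : hom g y) (u : hom s g) (f : hom y g) :
  is_bourn_normal n -> f ∘ n = idm g -> is_bourn_normal u -> is_bourn_normal (n ∘ u).
Proof.
  intros [Hn [R [r1 [r2 [Req Rn]]]]] Hf [Hu [E [e1 [e2 [Eeq En]]]]].
  destruct (joint_pullback_exists (f ∘ r1) (f ∘ r2) e1 e2) as [T [tr [te Ht]]].
  split; [exact (mono_comp n u Hn Hu)|].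
  exists T, (r1 ∘ tr), (r2 ∘ tr). split.
  - exact (equiv_rel_inverse_image f tr te Req Eeq Ht).
  - exact (normal_to_inverse_image f tr te Rn En Hf Ht).
Qed.

Section Conjugation.
Context {X GX SX : C} {k : hom X SX} {p1 : hom SX GX} {i : hom GX SX}
  (Hgen : is_generic_split_ext k p1 i) {c : hom X GX}
  {XX : C} {q1 q2 : hom XX X} (Hq : is_product q1 q2) {ins2 diag : hom X XX} {v : hom XX SX}
  (Hins1 : is_zero_mor (q1 ∘ ins2)) (Hins2 : q2 ∘ ins2 = idm X)
  (Hdiag1 : q1 ∘ diag = idm X) (Hdiag2 : q2 ∘ diag = idm X)
  (Hvk : v ∘ ins2 = k) (Hvp : p1 ∘ v = c ∘ q1) (Hvi : v ∘ diag = i ∘ c).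

Let p1i : p1 ∘ i = idm GX := proj1 (proj1 Hgen).
Let p1k : p1 ∘ k = 0m := kernel_zero (proj2 (proj1 Hgen)).
Let k_mono : is_mono k := kernel_mono (proj2 (proj1 Hgen)).
Let q1_ins2 : q1 ∘ ins2 = 0m := proj1 (zero_mor_iff _) Hins1.

Lemma conjugation_split_ext : is_split_ext ins2 q1 diag.
Proof. exact (product_split_ext diag ins2 Hq Hdiag1 q1_ins2 Hins2). Qed.

Lemma conjugation_morphism : is_split_ext_morphism ins2 q1 diag k p1 i v c.
Proof. split; [exact Hvk | split; [exact Hvp | exact Hvi]]. Qed.

(* For groups, [mu] is the multiplication [(φ, x) ↦ φ ∘ c x] of [[X] ⋉ X]; it is the
   codomain component of the map into the generic extension from the kernel pair of [p1]. *)
Lemma action_exists : exists mu : hom SX GX, mu ∘ k = c /\ mu ∘ i = idm GX.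
Proof.
  destruct (HPB _ _ _ p1 p1) as [R [e1 [e2 Hr]]].
  destruct (pullback_factor Hr k 0m) as [kr [KR1 KR2]]; [rewrite p1k; zsimpl; reflexivity|].
  destruct (pullback_factor Hr (idm SX) (idm SX) eq_refl) as [dl [DL1 DL2]].
  pose proof (pullback_split_ext kr dl (proj2 (proj1 Hgen)) Hr KR1 KR2 DL2) as Hsr.
  destruct (generic_map_exists Hgen Hsr) as [vr [mu Hmu]].
  exists mu. split.
  - destruct (pullback_factor Hr (k ∘ q2) (k ∘ q1)) as [u [U1 U2]].
    { rewrite !comp_assoc, p1k. zsimpl. reflexivity. }
    assert (Hu : is_split_ext_morphism ins2 q1 diag kr e2 dl u k).
    { split; [|split; [exact U2|]]; apply (pullback_ext Hr); rewrite !comp_assoc, ?U1, ?U2.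
      - rewrite KR1, <- comp_assoc, Hins2, comp_idr. reflexivity.
      - rewrite KR2, <- comp_assoc, q1_ins2. zsimpl. reflexivity.
      - rewrite DL1, <- comp_assoc, Hdiag2, comp_idl, comp_idr. reflexivity.
      - rewrite DL2, <- comp_assoc, Hdiag1, comp_idl, comp_idr. reflexivity. }
    exact (generic_map_unique Hgen _ _ _ _ conjugation_split_ext
      (split_ext_morphism_comp Hu Hmu) conjugation_morphism).
  - destruct (pullback_factor Hr (idm SX) (i ∘ p1)) as [u [U1 U2]].
    { rewrite comp_assoc, p1i, comp_idl, comp_idr. reflexivity. }
    assert (Hu : is_split_ext_morphism k p1 i kr e2 dl u i).
    { split; [|split; [exact U2|]]; apply (pullback_ext Hr); rewrite !comp_assoc, ?U1, ?U2.
      - rewrite KR1, comp_idl. reflexivity.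
      - rewrite KR2, <- comp_assoc, p1k. zsimpl. reflexivity.
      - rewrite DL1. reflexivity.
      - rewrite DL2, <- comp_assoc, p1i, comp_idl, comp_idr. reflexivity. }
    exact (generic_endomorphism_id Hgen _ _ (split_ext_morphism_comp Hu Hmu)).
Qed.

Lemma commutes_idm_conjugation_zero {b : C} (h : hom b X) :
  commutes h (idm X) -> c ∘ h = 0m.
Proof.
  intros [P [pb [py [Hp [phi [l [r [L1 [L2 [R1 [R2 [F1 F2]]]]]]]]]]]].
  apply zero_mor_iff in L2, R1.
  pose proof (product_split_ext l r Hp L1 R1 R2) as Hs.
  destruct (product_factor Hq (h ∘ pb) phi) as [w [W1 W2]].
  assert (Hw : is_split_ext_morphism r pb l ins2 q1 diag w h).
  { split; [|split; [exact W1|]]; apply (product_ext Hq); rewrite !comp_assoc, ?W1, ?W2.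
    - rewrite <- comp_assoc, R1, q1_ins2. zsimpl. reflexivity.
    - rewrite F2, Hins2. reflexivity.
    - rewrite Hdiag1, <- comp_assoc, L1, comp_idl, comp_idr. reflexivity.
    - rewrite F1, Hdiag2, comp_idl. reflexivity. }
  apply (generic_map_unique Hgen (v ∘ w) (k ∘ py) _ _ Hs
    (split_ext_morphism_comp Hw conjugation_morphism)).
  split; [|split]; zsimpl.
  - rewrite R2, comp_idr. reflexivity.
  - rewrite comp_assoc, p1k. zsimpl. reflexivity.
  - rewrite L2. zsimpl. reflexivity.
Qed.

Lemma conjugation_zero_commutes_idm {b : C} (h : hom b X) :
  c ∘ h = 0m -> commutes h (idm X).
Proof.
  intros Eh.
  destruct (product_exists b X) as [P [pb [py Hp]]].
  destruct (product_factor Hp (idm b) 0m) as [l [L1 L2]].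
  destruct (product_factor Hp 0m (idm X)) as [r [R1 R2]].
  pose proof (product_split_ext l r Hp L1 R1 R2) as Hs.
  destruct (split_ext_morphism_lift h v (k ∘ py) Hs conjugation_split_ext)
    as [w [W1 [_ W3]]].
  - rewrite Hvk, <- comp_assoc, R2, comp_idr. reflexivity.
  - rewrite Hvk. exact k_mono.
  - rewrite (comp_assoc v diag), Hvi, <- !comp_assoc, Eh, L2. zsimpl. reflexivity.
  - exists P, pb, py. split; [exact Hp|]. exists (q2 ∘ w), l, r.
    split; [exact L1|]. split; [apply zero_mor_iff; exact L2|].
    split; [apply zero_mor_iff; exact R1|]. split; [exact R2|]. split.
    + rewrite <- comp_assoc, W3, comp_assoc, Hdiag2, comp_idl. reflexivity.
    + rewrite <- comp_assoc, W1, Hins2. reflexivity.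
Qed.

Lemma conjugation_mono_trivial_center : is_mono c -> trivial_center X.
Proof.
  intros Hm. exists Z0, (zero_mor Z0 X). split; [exact HZ|].
  split; [exact (zero_commutes_idm X)|]. intros b h Hh.
  assert (Eh : h = 0m).
  { apply Hm. rewrite (commutes_idm_conjugation_zero h Hh). zsimpl. reflexivity. }
  exists (to_zero b). split; [rewrite Eh; zsimpl; reflexivity|].
  intros t _. apply to_zero_unique.
Qed.

Lemma trivial_center_conjugation_mono : trivial_center X -> is_mono c.
Proof.
  intros [z [g [Hz [_ Hcenter]]]]. apply mono_of_trivial_kernel. intros b h Eh.
  destruct (Hcenter _ _ (conjugation_zero_commutes_idm h Eh)) as [t [Ht _]].
  apply zero_mor_iff. exists z. split; [exact Hz|]. exists t, g. symmetry. exact Ht.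
Qed.

Context {mu : hom SX GX} (Hmk : mu ∘ k = c) (Hmi : mu ∘ i = idm GX).

Lemma conjugation_lift {a b : C} {kap : hom X a} {al : hom a b} {be : hom b a}
  (t : hom a GX) :
  is_mono c -> is_split_ext kap al be -> t ∘ kap = c ->
  exists w, is_split_ext_morphism kap al be k p1 i w (t ∘ be).
Proof.
  intros Hm Hs Ht. apply (split_ext_morphism_lift (t ∘ be) mu t Hs (proj1 Hgen)).
  - rewrite Hmk, Ht. reflexivity.
  - rewrite Hmk. exact Hm.
  - rewrite comp_assoc, Hmi, comp_idl. reflexivity.
Qed.

Lemma characteristic_conjugation_strong_complete :
  is_characteristic_mono c -> strong_complete GX.
Proof.
  intros Hch y m [b [al [be [_ Hk]]]].
  pose proof (characteristic_mono_is_mono c Hch) as Hm.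
  destruct (Hch _ _ (kernel_bourn_normal m al Hk))
    as [Hmc [S [s1 [s2 [[_ [[dS [D1 D2]] _]] Hnormal]]]]].
  destruct (normal_to_kernel Hnormal) as [kk [Hkk Hs2]].
  assert (Hs : is_split_ext kk s1 dS) by exact (conj D1 Hkk).
  destruct (generic_map_exists Hgen Hs) as [vS [w Hw]].
  exists w. split.
  - destruct (split_ext_morphism_lift m s2 (m ∘ mu) (proj1 Hgen) Hs) as [u Hu].
    + rewrite Hs2, <- comp_assoc, Hmk. reflexivity.
    + rewrite Hs2. exact Hmc.
    + rewrite comp_assoc, D2, comp_idl, <- comp_assoc, Hmi, comp_idr. reflexivity.
    + exact (generic_endomorphism_id Hgen _ _ (split_ext_morphism_comp Hu Hw)).
  - intros r Hr. destruct (conjugation_lift (r ∘ s2) Hm Hs) as [u Hu].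
    + rewrite <- comp_assoc, Hs2, comp_assoc, Hr, comp_idl. reflexivity.
    + rewrite <- comp_assoc, D2, comp_idr in Hu.
      exact (generic_map_unique Hgen _ _ _ _ Hs Hw Hu).
Qed.

Lemma action_conjugation : mu ∘ v = c ∘ q2.
Proof.
  apply (split_ext_jointly_epic _ _ conjugation_split_ext).
  - rewrite <- !comp_assoc, Hvk, Hmk, Hins2, comp_idr. reflexivity.
  - rewrite <- !comp_assoc, Hvi, comp_assoc, Hmi, comp_idl, Hdiag2, comp_idr. reflexivity.
Qed.

Lemma conjugation_pullback : is_pullback p1 c v q1.
Proof.
  destruct (HPB _ _ _ p1 c) as [P [ps [px Hpb]]].
  destruct (pullback_factor Hpb k 0m) as [kb [KB1 KB2]]; [rewrite p1k; zsimpl; reflexivity|].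
  destruct (pullback_factor Hpb (i ∘ c) (idm X)) as [bb [BB1 BB2]].
  { rewrite comp_assoc, p1i, comp_idl, comp_idr. reflexivity. }
  pose proof (pullback_split_ext kb bb (proj2 (proj1 Hgen)) Hpb KB1 KB2 BB2) as Hs.
  destruct (pullback_factor Hpb v q1 Hvp) as [u [U1 U2]].
  assert (Hu : is_iso u).
  { apply (split_ext_morphism_iso u conjugation_split_ext Hs).
    split; [|split; [rewrite comp_idl; exact U2|]]; apply (pullback_ext Hpb);
      rewrite !comp_assoc, ?U1, ?U2, ?comp_idr.
    - rewrite KB1. exact Hvk.
    - rewrite KB2. exact q1_ins2.
    - rewrite BB1. exact Hvi.
    - rewrite BB2. exact Hdiag1. }
  rewrite <- U1, <- U2. exact (pullback_precomp_iso u Hpb Hu).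
Qed.

Lemma action_jointly_monic : is_mono c -> jointly_monic p1 mu.
Proof.
  intros Hm. apply jointly_monic_of_trivial_kernel. intros q y E1 E2.
  destruct (kernel_factor y (proj2 (proj1 Hgen)) E1) as [x Hx].
  assert (Ex : x = 0m).
  { apply Hm. rewrite <- Hmk, <- comp_assoc, Hx, E2. zsimpl. reflexivity. }
  rewrite <- Hx, Ex. zsimpl. reflexivity.
Qed.

(* For groups, [(p1, mu)] is the relation [φ ~ φ ∘ c x] on [[X]], whose class of [1] is the
   image of [c]. *)
Lemma conjugation_bourn_normal : is_mono c -> is_bourn_normal c.
Proof.
  intros Hm. pose proof (action_jointly_monic Hm) as Hjm.
  split; [exact Hm|]. exists SX, p1, mu. split.
  - split; [exact Hjm|]. split; [exists i; split; [exact p1i | exact Hmi]|]. split.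
    + apply (reflexive_relation_symmetric p1 mu i Hjm p1i Hmi). intros q g Eg.
      destruct (kernel_factor g (proj2 (proj1 Hgen)) Eg) as [x Hx].
      destruct (product_factor Hq x 0m) as [y [Y1 Y2]].
      exists (v ∘ y). split.
      * rewrite comp_assoc, Hvp, <- comp_assoc, Y1, <- Hx, comp_assoc, Hmk. reflexivity.
      * rewrite comp_assoc, action_conjugation, <- comp_assoc, Y2. zsimpl. reflexivity.
    + exact (reflexive_relation_transitive p1 mu i Hjm p1i Hmi).
  - exists XX, q1, q2. split; [exact Hq|]. exists v.
    split; [exact Hvp|]. split; [exact action_conjugation | exact conjugation_pullback].
Qed.

Lemma conjugation_characteristic :
  is_mono c -> strong_complete GX -> is_characteristic_mono c.
Proof.
  intros Hm Hsc y n Hn. destruct (strong_complete_normal_split n Hsc Hn) as [r Hr].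
  exact (bourn_normal_comp_split_mono n c r Hn Hr (conjugation_bourn_normal Hm)).
Qed.

End Conjugation.

End Protomodular.

End FiniteLimits.

End CategoryTheory.

Theorem theorem5p5 (C : Cat) (HC0 : pointed C) (HCl : has_finite_limits C)
  (HCp : protomodular C) (X GX SX : ob C) (k : hom X SX) (p1 : hom SX GX)
  (i : hom GX SX) (Hgen : is_generic_split_ext k p1 i)
  (c : hom X GX) (Hc : is_conjugation k p1 i c) :
  ((exists (B A : ob C) (k' : hom GX A) (p' : hom A B) (i' : hom B A),
       is_generic_split_ext k' p' i') /\ is_characteristic_mono c)
  <-> (trivial_center X /\ strong_complete GX).
Proof.
  destruct HC0 as [Z0 HZ]. destruct HCl as [_ HPB].
  destruct Hc as [XX [q1 [q2 [Hq [ins2 [diag [v [Hins1 [Hins2 [Hdiag1 [Hdiag2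
    [Hvk [Hvp Hvi]]]]]]]]]]]]].
  destruct (action_exists HZ HPB Hgen Hq Hins1 Hins2 Hdiag1 Hdiag2 Hvk Hvp Hvi)
    as [mu [Hmk Hmi]].
  split.
  - intros [_ Hchar].
    pose proof (characteristic_mono_is_mono HZ HPB c Hchar) as Hmono.
    split.
    + eapply conjugation_mono_trivial_center; eauto.
    + eapply characteristic_conjugation_strong_complete; eauto.
  - intros [Hcenter Hcomplete].
    assert (Hmono : is_mono c) by (eapply trivial_center_conjugation_mono; eauto).
    split.
    + exact (strong_complete_generic_split_ext HZ HPB GX Hcomplete).
    + eapply conjugation_characteristic; eauto.
Qed.
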